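(* There exists a residually finite monoid $M$ whose (right) action on its set of $\mathcal{L}$-classes is not residually finite.
   Context: A monoid is residually finite if distinct elements are separated by homomorphisms to finite monoids. $x\mathcal{L}y$ iff $Mx=My$; $M$ acts on $M/\mathcal{L}$ by $L_x\cdot m=L_{xm}$. A right action of $M$ on a set $X$ is residually finite if for any distinct $x,y\in X$ there exist an action of $M$ on a finite set $Y$ and an action homomorphism $f:X\to Y$ with $f(x)\neq f(y)$. *)

From Stdlib Require Import List.


Record Monoid := {
  mcar :> Type;
  mop : mcar -> mcar -> mcar;
  mone : mcar;
  mop_assoc : forall x y z, mop x (mop y z) = mop (mop x y) z;
  mop_1l : forall x, mop mone x = x;
  mop_1r : forall x, mop x mone = x
}.

Definition finite_type (T : Type) : Prop := exists l : list T, forall x, In x l.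

Definition monoid_hom (M N : Monoid) (f : M -> N) : Prop :=
  f (mone M) = mone N /\ forall x y, f (mop M x y) = mop N (f x) (f y).

Definition residually_finite (M : Monoid) : Prop :=
  forall x y : M, x <> y ->
    exists (N : Monoid) (f : M -> N),
      finite_type N /\ monoid_hom M N f /\ f x <> f y.

Definition is_right_action (M : Monoid) (X : Type) (act : X -> M -> X) : Prop :=
  (forall x, act x (mone M) = x) /\
  (forall x m n, act x (mop M m n) = act (act x m) n).

Definition action_residually_finite (M : Monoid) (X : Type) (act : X -> M -> X) : Prop :=
  forall x y : X, x <> y ->
    exists (Y : Type) (actY : Y -> M -> Y),
      finite_type Y /\ is_right_action M Y actY /\
      exists f : X -> Y,
        (forall (z : X) (m : M), f (act z m) = actY (f z) m) /\ f x <> f y.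

Definition Lrel (M : Monoid) (x y : M) : Prop :=
  forall z : M, (exists a, z = mop M a x) <-> (exists b, z = mop M b y).

Lemma Lrel_refl (M : Monoid) (x : M) : Lrel M x x.
Proof. intro z; tauto. Qed.

Lemma Lrel_trans (M : Monoid) (x y z : M) : Lrel M x y -> Lrel M y z -> Lrel M x z.
Proof. intros H1 H2 w; split; intro H; [apply H2, H1, H | apply H1, H2, H]. Qed.

Lemma Lrel_rcong (M : Monoid) (x y m : M) : Lrel M x y -> Lrel M (mop M x m) (mop M y m).
Proof.
  intros H z; split; intros [a Ha]; subst z.
  - destruct (proj1 (H (mop M a x)) (ex_intro _ a eq_refl)) as [b Hb].
    exists b. rewrite mop_assoc, Hb, <- mop_assoc; reflexivity.
  - destruct (proj2 (H (mop M a y)) (ex_intro _ a eq_refl)) as [b Hb].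
    exists b. rewrite mop_assoc, Hb, <- mop_assoc; reflexivity.
Qed.

Definition Lclass (M : Monoid) : Type :=
  { P : M -> Prop | exists x : M, forall y, P y <-> Lrel M x y }.

Definition Lact_pred (M : Monoid) (P : Lclass M) (m : M) : M -> Prop :=
  fun y => exists x, proj1_sig P x /\ Lrel M (mop M x m) y.

Lemma Lact_pred_class (M : Monoid) (P : Lclass M) (m : M) :
  exists x0 : M, forall y, Lact_pred M P m y <-> Lrel M x0 y.
Proof.
  destruct P as [P [x0 Hx0]]. exists (mop M x0 m). intro y; split.
  - intros [x [Px Hxy]]. simpl in Px. apply (Lrel_trans M _ (mop M x m)); auto.
    apply Lrel_rcong, Hx0, Px.
  - intro H. exists x0. split; [apply Hx0, Lrel_refl | exact H].
Qed.

(** The right action L_x . m = L_{xm} of M on M/L. *)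
Definition Lact (M : Monoid) (P : Lclass M) (m : M) : Lclass M :=
  exist _ (Lact_pred M P m) (Lact_pred_class M P m).

From Stdlib Require Import ZArith Lia Factorial List Classical
  FunctionalExtensionality PropExtensionality ProofIrrelevance.

(* Take for M the submonoid of Z^(N) of the finitely supported a with
   phi_N(a) = sum_k a_k N!/k! >= 0 for N large (the sign of phi_N(a) is
   eventually constant).  M is a submonoid of the residually finite group Z^(N).
   Two elements supported below N are L-related as soon as phi_N agrees on
   them, so e_0 L n! e_n and 2 e_0 L 2 n! e_n, while e_0 and 2 e_0 are not
   L-related.  In an action on a set with n elements, the orbit of a point
   under the powers of e_n has preperiod and period at most n, so its points
   at times n! and 2 n! coincide; hence no finite action separates the
   L-classes of e_0 and 2 e_0. *)

Section LClasses.

Variable M : Monoid.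

Lemma Lrel_sym (x y : M) : Lrel M x y -> Lrel M y x.
Proof. intros H z; split; intro; apply H; auto. Qed.

Lemma Lrel_of_translates (a b u u' : M) :
  a = mop M u' b -> b = mop M u a -> Lrel M a b.
Proof.
  intros Ha Hb w; split; intros [c ->].
  - exists (mop M c u'). rewrite Ha. apply mop_assoc.
  - exists (mop M c u). rewrite Hb. apply mop_assoc.
Qed.

Lemma Lclass_ext (A B : Lclass M) :
  (forall y, proj1_sig A y <-> proj1_sig B y) -> A = B.
Proof.
  destruct A as [P p], B as [Q q]; simpl; intro H.
  assert (P = Q) by (extensionality y; apply propositional_extensionality; auto).
  subst. f_equal. apply proof_irrelevance.
Qed.

Definition Lclass_of (a : M) : Lclass M :=
  exist _ (Lrel M a) (ex_intro _ a (fun y => iff_refl _)).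

Lemma Lclass_of_eq (a b : M) : Lrel M a b -> Lclass_of a = Lclass_of b.
Proof.
  intro H. apply Lclass_ext. simpl. intro y; split; intro H'.
  - exact (Lrel_trans M _ _ _ (Lrel_sym _ _ H) H').
  - exact (Lrel_trans M _ _ _ H H').
Qed.

Lemma Lrel_of_Lclass_of_eq (a b : M) : Lclass_of a = Lclass_of b -> Lrel M a b.
Proof.
  intro H. apply (f_equal (@proj1_sig _ _)) in H. simpl in H.
  rewrite H. apply Lrel_refl.
Qed.

Lemma Lact_Lclass_of_one (m : M) : Lact M (Lclass_of (mone M)) m = Lclass_of m.
Proof.
  apply Lclass_ext. intro y. simpl. unfold Lact_pred. simpl. split.
  - intros [x [H1 H2]]. apply (Lrel_trans M _ (mop M x m)); auto.
    pose proof (Lrel_rcong M (mone M) x m H1) as H3.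
    rewrite mop_1l in H3. exact H3.
  - intro H. exists (mone M). rewrite mop_1l. split; [apply Lrel_refl | exact H].
Qed.

End LClasses.

Arguments Lclass_of {M}.

Definition mpow (M : Monoid) (z : M) (n : nat) : M :=
  Nat.iter n (fun x => mop M x z) (mone M).

Lemma act_mpow (M : Monoid) (Y : Type) (act : Y -> M -> Y) (y : Y) (z : M) n :
  is_right_action M Y act -> act y (mpow M z n) = Nat.iter n (fun y => act y z) y.
Proof.
  intros [H1 Hop]. induction n; simpl.
  - apply H1.
  - rewrite Hop. f_equal. exact IHn.
Qed.

Lemma Nat_divide_fact p n : 1 <= p <= n -> Nat.divide p (fact n).
Proof.
  induction n; intros H; [lia|].
  destruct (Nat.eq_dec p (S n)) as [->|Hne].
  - exists (fact n). simpl fact. lia.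
  - change (fact (S n)) with (S n * fact n). apply Nat.divide_mul_r, IHn. lia.
Qed.

Lemma le_fact n : n <= fact n.
Proof. induction n; simpl; [lia|]. pose proof (lt_O_fact n). nia. Qed.

Section FiniteDynamics.

Variables (Y : Type) (l : list Y).
Hypothesis l_full : forall y, In y l.
Variables (g : Y -> Y) (y : Y).

Lemma iter_collision :
  exists i j, i < j <= length l /\ Nat.iter i g y = Nat.iter j g y.
Proof.
  set (orbit := map (fun i => Nat.iter i g y) (seq 0 (S (length l)))).
  assert (Horbit : ~ NoDup orbit).
  { intro Hnd. assert (Hlen : length orbit <= length l)
      by (apply (NoDup_incl_length Hnd); intros x _; apply l_full).
    unfold orbit in Hlen. rewrite length_map, length_seq in Hlen. lia. }
  rewrite (NoDup_nth orbit y) in Horbit.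
  apply not_all_ex_not in Horbit as [i Horbit].
  apply not_all_ex_not in Horbit as [j Horbit].
  unfold orbit in Horbit. rewrite length_map, length_seq in Horbit.
  apply imply_to_and in Horbit as [Hi Horbit].
  apply imply_to_and in Horbit as [Hj Horbit].
  apply imply_to_and in Horbit as [Heq Hij].
  rewrite !(map_nth (fun i => Nat.iter i g y) _ 0), !seq_nth in Heq by lia.
  destruct (Nat.lt_gt_cases i j) as [[Hlt | Hgt] _]; [exact Hij | |].
  - exists i, j. split; [lia | exact Heq].
  - exists j, i. split; [lia | symmetry; exact Heq].
Qed.

Lemma iter_periodic i j :
  Nat.iter i g y = Nat.iter j g y -> i <= j ->
  forall q t, Nat.iter (t + q * (j - i) + i) g y = Nat.iter (t + i) g y.
Proof.
  intros Heq Hij q t. rewrite <- Nat.add_assoc, !(Nat.iter_add t). f_equal.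
  induction q; [reflexivity|].
  replace (S q * (j - i) + i) with (q * (j - i) + j) by lia.
  rewrite Nat.iter_add, <- Heq, <- Nat.iter_add. exact IHq.
Qed.

Lemma iter_twice_fact :
  Nat.iter (2 * fact (length l)) g y = Nat.iter (fact (length l)) g y.
Proof.
  destruct iter_collision as [i [j [Hij Heq]]].
  destruct (Nat_divide_fact (j - i) (length l)) as [q Hq]; [lia|].
  pose proof (le_fact (length l)).
  replace (2 * fact (length l)) with (fact (length l) - i + q * (j - i) + i) by lia.
  rewrite iter_periodic by (auto || lia). f_equal. lia.
Qed.

End FiniteDynamics.

Lemma finite_action_mpow_fact (M : Monoid) (Y : Type) (act : Y -> M -> Y) (l : list Y) :
  (forall y, In y l) -> is_right_action M Y act ->
  forall y z, act y (mpow M z (2 * fact (length l))) = act y (mpow M z (fact (length l))).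
Proof.
  intros Hl Hact y z. rewrite !act_mpow by exact Hact. apply iter_twice_fact, Hl.
Qed.

Open Scope Z_scope.

Section ZMod.

Variable p : positive.

Definition Zp := {z : Z | z mod Z.pos p = z}.

Definition Zp_of (z : Z) : Zp := exist _ (z mod Z.pos p) (Zmod_mod _ _).

Lemma Zp_ext (x y : Zp) : proj1_sig x = proj1_sig y -> x = y.
Proof.
  destruct x as [a pa], y as [b pb]; simpl; intros ->. f_equal. apply proof_irrelevance.
Qed.

Lemma Zp_of_val (x : Zp) : Zp_of (proj1_sig x) = x.
Proof. apply Zp_ext. exact (proj2_sig x). Qed.

Definition Zp_monoid : Monoid.
Proof.
  refine {| mcar := Zp; mop x y := Zp_of (proj1_sig x + proj1_sig y); mone := Zp_of 0 |};
    intros; simpl.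
  - apply Zp_ext; simpl. rewrite Z.add_mod_idemp_l, Z.add_mod_idemp_r by lia.
    f_equal. ring.
  - apply Zp_of_val.
  - rewrite Zmod_0_l, Z.add_0_r. apply Zp_of_val.
Defined.

Lemma Zp_of_add (a b : Z) : Zp_of (a + b) = mop Zp_monoid (Zp_of a) (Zp_of b).
Proof. apply Zp_ext; simpl. apply Z.add_mod. lia. Qed.

Lemma Zp_finite : finite_type Zp_monoid.
Proof.
  exists (map (fun i => Zp_of (Z.of_nat i)) (seq 0 (Pos.to_nat p))).
  intros x. apply in_map_iff. exists (Z.to_nat (proj1_sig x)).
  pose proof (Z.mod_pos_bound (proj1_sig x) (Z.pos p) ltac:(lia)) as Hb.
  rewrite (proj2_sig x) in Hb. split.
  - rewrite Z2Nat.id by lia. apply Zp_of_val.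
  - apply in_seq. lia.
Qed.

End ZMod.

Lemma Z_mod_separates (a b : Z) :
  a <> b -> a mod (Z.abs (a - b) + 1) <> b mod (Z.abs (a - b) + 1).
Proof.
  intros Hab Hmod. apply Z.cong_iff_0, Z.mod_divide in Hmod; [|lia].
  apply Znumtheory.Zdivide_bounds in Hmod; lia.
Qed.

(* [phi a N] is phi_N(a) = sum_(k <= N) a_k N!/k!, via Horner's scheme. *)
Fixpoint phi (a : nat -> Z) (N : nat) : Z :=
  match N with
  | O => a O
  | S N' => Z.of_nat (S N') * phi a N' + a (S N')
  end.

Definition supported_le (a : nat -> Z) (N : nat) : Prop :=
  forall k, (N < k)%nat -> a k = 0.

Lemma phi_ext a b N : (forall k, a k = b k) -> phi a N = phi b N.
Proof. intro H; induction N; cbn [phi]; rewrite ?IHN, H; reflexivity. Qed.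

Lemma phi_lin a b c1 c2 N :
  phi (fun k => c1 * a k + c2 * b k) N = c1 * phi a N + c2 * phi b N.
Proof. induction N; cbn [phi]; [|rewrite IHN]; ring. Qed.

Lemma phi_nonneg_le a N N' :
  supported_le a N -> 0 <= phi a N -> (N <= N')%nat -> 0 <= phi a N'.
Proof.
  intros Ha H0 HN. induction HN as [|N' HN IH]; [exact H0|].
  cbn [phi]. rewrite (Ha (S N')) by lia. nia.
Qed.

Definition admissible (a : nat -> Z) : Prop :=
  exists N, supported_le a N /\ 0 <= phi a N.

Lemma admissible_add a b : admissible a -> admissible b -> admissible (fun k => a k + b k).
Proof.
  intros [N1 [S1 P1]] [N2 [S2 P2]]. exists (Nat.max N1 N2). split.
  - intros k Hk. rewrite S1, S2 by lia. reflexivity.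
  - rewrite (phi_ext _ (fun k => 1 * a k + 1 * b k)) by (intro; ring).
    rewrite phi_lin.
    pose proof (phi_nonneg_le a N1 (Nat.max N1 N2) S1 P1 ltac:(lia)).
    pose proof (phi_nonneg_le b N2 (Nat.max N1 N2) S2 P2 ltac:(lia)). lia.
Qed.

Lemma admissible_zero : admissible (fun _ => 0).
Proof. exists 0%nat. split; [intros k _; reflexivity | simpl; lia]. Qed.

Definition Mphi_car := {a : nat -> Z | admissible a}.

Lemma Mphi_ext (x y : Mphi_car) : (forall k, proj1_sig x k = proj1_sig y k) -> x = y.
Proof.
  destruct x as [a pa], y as [b pb]; simpl; intro H.
  assert (a = b) by (extensionality k; auto). subst. f_equal. apply proof_irrelevance.
Qed.

Definition Mphi : Monoid.
Proof.
  refine {| mcar := Mphi_car;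
            mop x y := exist _ _ (admissible_add _ _ (proj2_sig x) (proj2_sig y));
            mone := exist _ _ admissible_zero |};
    intros; apply Mphi_ext; intro k; simpl; lia.
Defined.

Lemma Mphi_op_val (a b : Mphi) k :
  proj1_sig (mop Mphi a b) k = proj1_sig a k + proj1_sig b k.
Proof. reflexivity. Qed.

Lemma Mphi_mpow_val (z : Mphi) m k :
  proj1_sig (mpow Mphi z m) k = Z.of_nat m * proj1_sig z k.
Proof.
  induction m; [reflexivity|].
  change (mpow Mphi z (S m)) with (mop Mphi (mpow Mphi z m) z).
  rewrite Mphi_op_val, IHm, Nat2Z.inj_succ. ring.
Qed.

Lemma Mphi_residually_finite : residually_finite Mphi.
Proof.
  intros a b Hab.
  assert (Hk : exists k, proj1_sig a k <> proj1_sig b k).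
  { apply NNPP; intro Hn. apply Hab, Mphi_ext. intro k.
    apply NNPP; intro; apply Hn; eauto. }
  destruct Hk as [k Hk].
  set (p := Z.to_pos (Z.abs (proj1_sig a k - proj1_sig b k) + 1)).
  exists (Zp_monoid p), (fun c : Mphi => Zp_of p (proj1_sig c k)).
  split; [apply Zp_finite|]. split; [split|].
  - reflexivity.
  - intros x y. apply Zp_of_add.
  - intro H. apply (f_equal (@proj1_sig _ _)) in H. simpl in H.
    unfold p in H. rewrite Z2Pos.id in H by lia.
    exact (Z_mod_separates _ _ Hk H).
Qed.

Lemma Lrel_of_phi_eq (a b : Mphi) N :
  supported_le (proj1_sig a) N -> supported_le (proj1_sig b) N ->
  phi (proj1_sig a) N = phi (proj1_sig b) N -> Lrel Mphi a b.
Proof.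
  intros Sa Sb Hphi.
  assert (Hdiff : forall x y : Mphi, supported_le (proj1_sig x) N ->
            supported_le (proj1_sig y) N -> phi (proj1_sig x) N = phi (proj1_sig y) N ->
            admissible (fun k => 1 * proj1_sig x k + (-1) * proj1_sig y k)).
  { intros x y Sx Sy Hxy. exists N. split.
    - intros k Hk. rewrite Sx, Sy by lia. ring.
    - rewrite phi_lin. lia. }
  apply (Lrel_of_translates Mphi a b (exist _ _ (Hdiff b a Sb Sa (eq_sym Hphi)))
           (exist _ _ (Hdiff a b Sa Sb Hphi)));
    apply Mphi_ext; intro k; rewrite Mphi_op_val; cbn [proj1_sig]; ring.
Qed.

Definition unit_vec (n : nat) : nat -> Z := fun k => if Nat.eqb k n then 1 else 0.

Lemma unit_vec_supported n : supported_le (unit_vec n) n.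
Proof. intros k Hk. unfold unit_vec. destruct (Nat.eqb_spec k n); [lia | reflexivity]. Qed.

Lemma phi_unit_vec_lt n m : (m < n)%nat -> phi (unit_vec n) m = 0.
Proof.
  induction m; intros H; cbn [phi].
  - unfold unit_vec. destruct (Nat.eqb_spec 0 n); lia.
  - rewrite IHm by lia. unfold unit_vec. destruct (Nat.eqb_spec (S m) n); lia.
Qed.

Lemma phi_unit_vec n : phi (unit_vec n) n = 1.
Proof.
  destruct n; [reflexivity|]. cbn [phi]. rewrite phi_unit_vec_lt by lia.
  unfold unit_vec. rewrite Nat.eqb_refl. ring.
Qed.

Lemma phi_unit_vec0 N : phi (unit_vec 0) N = Z.of_nat (fact N).
Proof.
  induction N; [reflexivity|]. cbn [phi]. rewrite IHN, (unit_vec_supported 0 (S N)) by lia.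
  change (fact (S N)) with (S N * fact N)%nat. rewrite Nat2Z.inj_mul. ring.
Qed.

Lemma admissible_unit_vec n : admissible (unit_vec n).
Proof. exists n. split; [apply unit_vec_supported | rewrite phi_unit_vec; lia]. Qed.

Definition basis (n : nat) : Mphi := exist _ (unit_vec n) (admissible_unit_vec n).

Lemma mpow_basis_val c n k : proj1_sig (mpow Mphi (basis n) c) k = Z.of_nat c * unit_vec n k.
Proof. apply Mphi_mpow_val. Qed.

Lemma phi_mpow_basis c n N :
  phi (proj1_sig (mpow Mphi (basis n) c)) N = Z.of_nat c * phi (unit_vec n) N.
Proof.
  rewrite (phi_ext _ (fun k => Z.of_nat c * unit_vec n k + 0 * unit_vec n k)).
  - rewrite phi_lin. ring.
  - intro k. rewrite mpow_basis_val. ring.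
Qed.

Lemma mpow_basis_supported c n : supported_le (proj1_sig (mpow Mphi (basis n) c)) n.
Proof. intros k Hk. rewrite mpow_basis_val, unit_vec_supported by lia. ring. Qed.

Lemma Lrel_mpow_basis0_basis c n :
  Lrel Mphi (mpow Mphi (basis 0) c) (mpow Mphi (basis n) (c * fact n)).
Proof.
  apply (Lrel_of_phi_eq _ _ n).
  - intros k Hk. apply (mpow_basis_supported c 0). lia.
  - apply mpow_basis_supported.
  - rewrite !phi_mpow_basis, phi_unit_vec0, phi_unit_vec, Nat2Z.inj_mul. ring.
Qed.

Lemma not_Lrel_mpow_basis0 c c' :
  (c < c')%nat -> ~ Lrel Mphi (mpow Mphi (basis 0) c) (mpow Mphi (basis 0) c').
Proof.
  intros Hlt H. destruct (proj1 (H (mpow Mphi (basis 0) c))) as [d Hd].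
  { exists (mone Mphi). symmetry. apply mop_1l. }
  destruct (proj2_sig d) as [N [_ HN]].
  rewrite (phi_ext _ (fun k => (Z.of_nat c - Z.of_nat c') * unit_vec 0 k + 0 * unit_vec 0 k))
    in HN.
  - rewrite phi_lin, phi_unit_vec0 in HN.
    assert ((Z.of_nat c - Z.of_nat c') * Z.of_nat (fact N) < 0)
      by (apply Z.mul_neg_pos; pose proof (lt_O_fact N); lia).
    lia.
  - intro k. apply (f_equal (fun x : Mphi => proj1_sig x k)) in Hd.
    rewrite Mphi_op_val, !mpow_basis_val in Hd.
    rewrite Z.mul_sub_distr_r, Hd. ring.
Qed.

Close Scope Z_scope.

Theorem mainTheorem6 :
  exists M : Monoid,
    residually_finite M /\ ~ action_residually_finite M (Lclass M) (Lact M).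
Proof.
  exists Mphi. split; [exact Mphi_residually_finite |]. intro Hrf.
  assert (Hne : Lclass_of (mpow Mphi (basis 0) 1) <> Lclass_of (mpow Mphi (basis 0) 2)).
  { intro H. apply (not_Lrel_mpow_basis0 1 2); [lia |]. exact (Lrel_of_Lclass_of_eq _ _ _ H). }
  destruct (Hrf _ _ Hne) as (Y & actY & [l Hl] & Hact & f & Hf & Hfne).
  apply Hfne.
  set (y0 := f (Lclass_of (mone Mphi))).
  assert (Hf1 : forall m, f (Lclass_of m) = actY y0 m).
  { intro m. rewrite <- Lact_Lclass_of_one. apply Hf. }
  rewrite (Lclass_of_eq _ _ _ (Lrel_mpow_basis0_basis 1 (length l))),
          (Lclass_of_eq _ _ _ (Lrel_mpow_basis0_basis 2 (length l))), !Hf1, Nat.mul_1_l.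
  symmetry. exact (finite_action_mpow_fact _ _ _ _ Hl Hact _ _).
Qed.
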